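(* Let $\gamma>0$ and $\theta>0$ be fixed constants, let $\delta>0$ (the fatality rate), and let $y(0),y(1),y(2),\dots$ be a given real sequence (the measured fraction of deceased individuals). Consider the discrete-time linear time-invariant filter \[ \hat{x}(k+1)=A\,\hat{x}(k)+B\,\hat{u}(k),\qquad \hat{z}(k)=C\,\hat{x}(k)+D\,\hat{u}(k),\qquad k=0,1,2,\dots, \] with state $\hat{x}(k)\in\mathbb{R}^2$, output $\hat{z}(k)=(\hat{z}_1(k),\hat{z}_2(k))^T\in\mathbb{R}^2$, matrices \[ A=\begin{bmatrix}0&0\\1&0\end{bmatrix},\quad B=\begin{bmatrix}1\\0\end{bmatrix},\quad D=\begin{bmatrix}\gamma^{-1}\theta^{-1}\\0\end{bmatrix},\quad C=\begin{bmatrix}\theta^{-1}+\gamma^{-1}-2\theta^{-1}\gamma^{-1} & (1-\theta^{-1})(1-\gamma^{-1})\\ \theta^{-1} & 1-\theta^{-1}\end{bmatrix}, \] arbitrary initial state $\hat{x}(0)\in\mathbb{R}^2$ (which may depend on $\delta$), and input $\hat{u}(k)=1-\delta^{-1}y(k)$. Then for every $k\ge 2$ the estimate \[ \hat{R}(k)=\frac{\hat{z}_1(k)-\hat{z}_1(k+1)}{\gamma\,(\hat{z}_2(k)-\hat{z}_1(k))} \] (whenever the denominator is nonzero) is independent of the value of the fatality rate $\delta$.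
   Context: This filter arises from an SIRDC epidemic model in which $z_1=x_1$ (susceptible fraction), $z_2=x_1+x_2$ (susceptible plus infected), and $\hat R$ is the estimated effective reproduction number; $\gamma$ is the inverse infectious period, $\theta$ the inverse resolution time. *)

From HB Require Import structures.
From mathcomp Require Import all_boot all_order all_algebra.
Set Implicit Arguments. Unset Strict Implicit. Unset Printing Implicit Defensive.
Import Order.TTheory GRing.Theory Num.Theory.
Local Open Scope ring_scope.

Section SIRDCFilter.
Variable R : realFieldType.

Definition mx22 (a b c d : R) : 'M[R]_2 :=
  \matrix_(i < 2, j < 2)
    if i == 0 :> nat then (if j == 0 :> nat then a else b)
    else (if j == 0 :> nat then c else d).

Definition cv2 (a b : R) : 'cV[R]_2 :=
  \col_(i < 2) if i == 0 :> nat then a else b.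

Definition idx0 : 'I_2 := @Ordinal 2 0 isT.
Definition idx1 : 'I_2 := @Ordinal 2 1 isT.

Definition filtA : 'M[R]_2 := mx22 0 0 1 0.
Definition filtB : 'cV[R]_2 := cv2 1 0.
Definition filtD (gamma theta : R) : 'cV[R]_2 := cv2 (gamma^-1 * theta^-1) 0.
Definition filtC (gamma theta : R) : 'M[R]_2 :=
  mx22 (theta^-1 + gamma^-1 - 2 * theta^-1 * gamma^-1)
       ((1 - theta^-1) * (1 - gamma^-1))
       theta^-1 (1 - theta^-1).

Definition uhat (delta : R) (y : nat -> R) (k : nat) : R := 1 - delta^-1 * y k.

Fixpoint xhat (delta : R) (y : nat -> R) (x0 : 'cV[R]_2) (k : nat) : 'cV[R]_2 :=
  match k with
  | 0 => x0
  | k'.+1 => filtA *m xhat delta y x0 k' + uhat delta y k' *: filtB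
  end.

Definition zhat (gamma theta delta : R) (y : nat -> R) (x0 : 'cV[R]_2) (k : nat)
  : 'cV[R]_2 :=
  filtC gamma theta *m xhat delta y x0 k + uhat delta y k *: filtD gamma theta.

Definition zhat1 gamma theta delta y x0 k : R := zhat gamma theta delta y x0 k idx0 ord0.
Definition zhat2 gamma theta delta y x0 k : R := zhat gamma theta delta y x0 k idx1 ord0.

Definition Rhat_den (gamma theta delta : R) y x0 k : R :=
  gamma * (zhat2 gamma theta delta y x0 k - zhat1 gamma theta delta y x0 k).

Definition Rhat (gamma theta delta : R) y x0 k : R :=
  (zhat1 gamma theta delta y x0 k - zhat1 gamma theta delta y x0 k.+1)
  / Rhat_den gamma theta delta y x0 k.

End SIRDCFilter.

(* For k >= 2 the state of the filter holds the two previous inputs, so each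
   output coordinate z_i(k) is a weighted sum of u(k), u(k-1), u(k-2), and the
   weights in each row of [C D] sum to 1.  Since u = 1 - y / delta, this gives
   z_i(k) = 1 - (weighted sum of y) / delta: every difference of outputs is the
   corresponding delta-free difference scaled by 1 / delta, and this common
   factor cancels in the quotient defining R(k). *)

From HB Require Import structures.
From mathcomp Require Import all_boot all_order all_algebra.
From mathcomp Require Import ring.
Import Order.TTheory GRing.Theory Num.Theory.
Local Open Scope ring_scope.

Lemma divf_mul2l (F : fieldType) (e a b : F) : e != 0 -> e * a / (e * b) = a / b.
Proof. by move=> e_neq0; rewrite -mulf_div divff ?mul1r. Qed.

Section SIRDCFilterAlgebra.
Variable R : realFieldType.
Implicit Types (M : 'M[R]_2) (v : 'cV[R]_2) (y : nat -> R) (delta : R).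

Lemma mulmx2E M v i :
  (M *m v) i ord0 = M i idx0 * v idx0 ord0 + M i idx1 * v idx1 ord0.
Proof.
rewrite mxE !big_ord_recr big_ord0 /= add0r.
have -> : widen_ord (leqnSn 1) ord_max = idx0 by apply/val_inj.
by have -> : (ord_max : 'I_2) = idx1 by apply/val_inj.
Qed.

Lemma xhatS0 delta y x0 k : xhat delta y x0 k.+1 idx0 ord0 = uhat delta y k.
Proof. by rewrite /= mxE mulmx2E /filtA /filtB /mx22 /cv2 !mxE /=; ring. Qed.

Lemma xhatS1 delta y x0 k :
  xhat delta y x0 k.+1 idx1 ord0 = xhat delta y x0 k idx0 ord0.
Proof. by rewrite /= mxE mulmx2E /filtA /filtB /mx22 /cv2 !mxE /=; ring. Qed.

Variables gamma theta : R.

Definition zlin (i : 'I_2) (v : nat -> R) (k : nat) : R :=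
  filtC gamma theta i idx0 * v k.+1 + filtC gamma theta i idx1 * v k
  + filtD gamma theta i ord0 * v k.+2.

Lemma filt_row_sum1 (i : 'I_2) :
  filtC gamma theta i idx0 + filtC gamma theta i idx1 + filtD gamma theta i ord0
  = 1.
Proof.
rewrite /filtC /filtD /mx22 /cv2 !mxE /=.
by case: i => [[|[|i]] hi] //=; ring.
Qed.

Lemma zhatSS delta y x0 k (i : 'I_2) :
  zhat gamma theta delta y x0 k.+2 i ord0 = zlin i (uhat delta y) k.
Proof.
rewrite /zhat /zlin mxE mulmx2E xhatS1 !xhatS0.
by rewrite [X in _ + X = _]mxE (mulrC (uhat _ _ k.+2)).
Qed.

Lemma zlin_affine (i : 'I_2) (e : R) y k :
  zlin i (fun n => 1 - e * y n) k = 1 - e * zlin i y k.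
Proof.
rewrite -[in RHS](filt_row_sum1 i) /zlin.
by ring.
Qed.

Lemma zhatSS_affine delta y x0 k (i : 'I_2) :
  zhat gamma theta delta y x0 k.+2 i ord0 = 1 - delta^-1 * zlin i y k.
Proof. by rewrite zhatSS zlin_affine. Qed.

(* No nonvanishing of the denominator is needed: with x / 0 = 0 in a field,
   both sides are then 0. *)
Lemma RhatSS delta y x0 k : delta != 0 ->
  Rhat gamma theta delta y x0 k.+2
  = (zlin idx0 y k.+1 - zlin idx0 y k) / (gamma * (zlin idx0 y k - zlin idx1 y k)).
Proof.
move=> delta_neq0; rewrite /Rhat /Rhat_den /zhat1 /zhat2 !zhatSS_affine.
have diffE a b : 1 - delta^-1 * a - (1 - delta^-1 * b) = delta^-1 * (b - a).
  by ring.
by rewrite !diffE (mulrCA gamma) divf_mul2l ?invr_eq0.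
Qed.

End SIRDCFilterAlgebra.

Theorem proposition1 (R : realFieldType) (gamma theta : R)
  (hgamma : 0 < gamma) (htheta : 0 < theta) (y : nat -> R)
  (delta1 delta2 : R) (hd1 : 0 < delta1) (hd2 : 0 < delta2)
  (x01 x02 : 'cV[R]_2) (k : nat) (hk : (2 <= k)%N) :
  Rhat_den gamma theta delta1 y x01 k != 0 ->
  Rhat_den gamma theta delta2 y x02 k != 0 ->
  Rhat gamma theta delta1 y x01 k = Rhat gamma theta delta2 y x02 k.
Proof.
case: k hk => [|[|k]] // _ _ _.
by rewrite !RhatSS ?gt_eqF.
Qed.
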